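(* Let $R$ be a Bézout domain and let $A,B,C\in R^{n\times n}$ satisfy $ABA=ACA$. If $AB$ and $CA$ are group invertible, then $(AB)^{\#}$ is similar to $(CA)^{\#}$.
   Context: A Bézout domain is an integral domain in which every finitely generated ideal is principal. A matrix $M\in R^{n\times n}$ is group invertible if there exists $X\in R^{n\times n}$ with $MX=XM$, $XMX=X$, $MXM=M$; such $X$ is unique and denoted $M^{\#}$ (the group inverse). Two matrices $M,N\in R^{n\times n}$ are similar if $M=S^{-1}NS$ for some invertible $S\in R^{n\times n}$. *)

From mathcomp Require Import all_boot all_order all_algebra.
Set Implicit Arguments. Unset Strict Implicit. Unset Printing Implicit Defensive.
Import GRing.Theory.
Local Open Scope ring_scope.

Definition fg_ideal_mem (R : comRingType) (s : seq R) (x : R) : Prop :=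
  exists c : 'I_(size s) -> R, x = \sum_(i < size s) c i * s`_i.

Definition bezout_domain (R : idomainType) : Prop :=
  forall s : seq R, exists d : R,
    forall x : R, fg_ideal_mem s x <-> exists r : R, x = r * d.

Definition is_group_inverse (R : comRingType) (n : nat) (M X : 'M[R]_n) : Prop :=
  [/\ M *m X = X *m M, X *m M *m X = X & M *m X *m M = M].

Definition group_invertible (R : comRingType) (n : nat) (M : 'M[R]_n) : Prop :=
  exists X, is_group_inverse M X.

Definition mx_similar (R : comUnitRingType) (n : nat) (M N : 'M[R]_n) : Prop :=
  exists S : 'M[R]_n, S \in unitmx /\ M = invmx S *m N *m S.

(* Write P = AB and Q = CA, with group inverses X and Y.  From ABA = ACA we get
   P A = A Q and Q (CAB) = (CAB) P; group inverses inherit such intertwinings,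
   so X A = A Y and Y (CAB) = (CAB) X.  Taking V = C X, the idempotents E = PX
   and F = QY factor as E = A V and F = V A.  Over a Bezout domain every
   idempotent matrix is similar to some pid_mx r (a nonzero column of its image
   can be moved to a multiple of the first basis vector by a unimodular matrix,
   which splits off a 1), and r is the rank over the fraction field; hence E and
   F, having equal ranks, are similar: U E = F U with U invertible.  Then
   S = V + U (1 - E) is invertible, with inverse A F + U^-1 (1 - F), and
   S X = Y S. *)

From mathcomp Require Import all_boot all_order all_algebra.
From mathcomp Require Import ring.
Set Implicit Arguments. Unset Strict Implicit. Unset Printing Implicit Defensive.
Import GRing.Theory.
Local Open Scope ring_scope.

Section IdempotentConjugation.

Variables (T : pzRingType) (e f a v u u' : T).
Hypotheses (ee : e * e = e) (ff : f * f = f) (av : a * v = e) (va : v * a = f).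
Hypotheses (ve : v * e = v) (uu' : u * u' = 1) (u'u : u' * u = 1) (ue : u * e = f * u).

Lemma idempotent_conjugator_rinv :
  (v + u * (1 - e)) * (a * f + u' * (1 - f)) = 1.
Proof.
have eu' : e * u' = u' * f.
  by rewrite -[e * u']mul1r -u'u -mulrA (mulrA u) ue -mulrA uu' mulr1.
have f1f : f * (1 - f) = 0 by rewrite mulrBr mulr1 ff subrr.
have vaf : v * (a * f) = f by rewrite mulrA va ff.
have vu' : v * (u' * (1 - f)) = 0.
  by rewrite -ve -mulrA (mulrA e) eu' -mulrA f1f !mulr0.
have eaf : (1 - e) * (a * f) = 0.
  by rewrite mulrBl mul1r -av -mulrA (mulrA v) va mulrA -mulrA ff subrr.
have uu'f : (1 - e) * (u' * (1 - f)) = u' * (1 - f).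
  by rewrite mulrBl mul1r mulrA eu' -mulrA f1f mulr0 subr0.
rewrite mulrDl (mulrDr v) (mulrDr (u * _)) vaf vu' -!mulrA eaf uu'f.
by rewrite mulr0 addr0 add0r mulrA uu' mul1r addrC subrK.
Qed.

Lemma idempotent_conjugator_intertwine (x y : T) :
  e * x = x -> y * f = y -> v * x = y * v ->
  (v + u * (1 - e)) * x = y * (v + u * (1 - e)).
Proof.
move=> ex yf vx.
have e1x : (1 - e) * x = 0 by rewrite mulrBl mul1r ex subrr.
have yu1e : y * (u * (1 - e)) = 0.
  by rewrite -yf -mulrA (mulrA f) -ue -mulrA mulrBr mulr1 ee subrr !mulr0.
by rewrite mulrDl (mulrDr y) -mulrA e1x yu1e mulr0 !addr0.
Qed.

End IdempotentConjugation.

Section GroupInverse.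

Variables (R : comNzRingType) (n : nat).
Implicit Types P Q X Y Z : 'M[R]_n.

Lemma group_inverse_intertwine P Q X Y Z :
  is_group_inverse P X -> is_group_inverse Q Y -> P *m Z = Z *m Q ->
  X *m Z = Z *m Y.
Proof.
rewrite /is_group_inverse !mulmxE => -[PX XPX PXP] [QY YQY QYQ] PZ.
have XE : X = X * X * P by rewrite -mulrA -PX mulrA XPX.
have YE : Y = Q * (Y * Y) by rewrite mulrA QY YQY.
have QE : Q = Q * Q * Y by rewrite -mulrA QY mulrA QYQ.
have XZQ : X * Z = X * X * Z * Q by rewrite {1}XE -mulrA PZ !mulrA.
have XZQY : X * Z = X * Z * (Q * Y).
  by rewrite {1}XZQ {1}QE !mulrA -XZQ.
have ZYPX : Z * Y = P * X * Z * Y.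
  by rewrite {1}YE mulrA -PZ -{1}PXP -(mulrA _ P) PZ -!mulrA -YE.
by rewrite XZQY mulrA -(mulrA X) -PZ mulrA -PX -ZYPX.
Qed.

End GroupInverse.

Section Similarity.

Variable R : comUnitRingType.

Lemma intro_mx_similar n (M N S S' : 'M[R]_n) :
  S' *m S = 1%:M -> M = S' *m N *m S -> mx_similar M N.
Proof.
move=> S'S ->; have [uS' uS] := mulmx1_unit S'S.
exists S; split=> //; congr (_ *m _ *m _).
by rewrite -[S']mulmx1 -(mulmxV uS) mulmxA S'S mul1mx.
Qed.

Lemma mx_similar_refl n (M : 'M[R]_n) : mx_similar M M.
Proof. by apply: (@intro_mx_similar _ _ _ 1%:M 1%:M); rewrite ?mulmx1 ?mul1mx. Qed.

Lemma mx_similar_sym n (M N : 'M[R]_n) : mx_similar M N -> mx_similar N M.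
Proof.
case=> S [uS ->]; apply: (intro_mx_similar (mulmxV uS)).
by rewrite !mulmxA mulmxV // mul1mx mulmxK.
Qed.

Lemma mx_similar_trans n (M N L : 'M[R]_n) :
  mx_similar M N -> mx_similar N L -> mx_similar M L.
Proof.
case=> S [uS ->] [T [uT ->]].
apply: (@intro_mx_similar _ _ _ (T *m S) (invmx S *m invmx T)).
  by rewrite mulmxA mulmxKV // mulVmx.
by rewrite !mulmxA.
Qed.

Lemma mx_similar_block_diag m n (D : 'M[R]_m) (M N : 'M[R]_n) :
  mx_similar M N -> mx_similar (block_mx D 0 0 M) (block_mx D 0 0 N).
Proof.
case=> S [uS ->].
apply: (@intro_mx_similar _ _ _ (block_mx 1%:M 0 0 S) (block_mx 1%:M 0 0 (invmx S))).
  by rewrite mulmx_block !(mulmx0, mul0mx, mul1mx, addr0, add0r) mulVmx // -scalar_mx_block.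
by rewrite !mulmx_block !(mulmx0, mul0mx, mul1mx, mulmx1, addr0, add0r).
Qed.

Lemma mx_similar_ublock_diag m n (B : 'M[R]_(m, n)) (D : 'M[R]_n) :
  B *m D = 0 -> mx_similar (block_mx 1%:M B 0 D) (block_mx 1%:M 0 0 D).
Proof.
move=> BD0.
apply: (@intro_mx_similar _ _ _ (block_mx 1%:M B 0 1%:M) (block_mx 1%:M (- B) 0 1%:M)).
  rewrite mulmx_block !(mulmx0, mul0mx, mul1mx, mulmx1, addr0, add0r).
  by rewrite subrr -scalar_mx_block.
rewrite !mulmx_block !(mulmx0, mul0mx, mul1mx, mulmx1, addr0, add0r).
by rewrite mulNmx BD0 oppr0 addr0.
Qed.

End Similarity.

Section MapRank.

Variables (R : comUnitRingType) (F : fieldType) (f : {rmorphism R -> F}).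

Lemma mxrank_map_mul3 n (X Y Z : 'M[R]_n) :
  (\rank (map_mx f (X *m Y *m Z)) <= \rank (map_mx f Y))%N.
Proof.
by rewrite !map_mxM; apply: leq_trans (mxrankM_maxl _ _) (mxrankM_maxr _ _).
Qed.

Lemma mxrank_map_similar n (M N : 'M[R]_n) :
  mx_similar M N -> \rank (map_mx f M) = \rank (map_mx f N).
Proof.
case=> S [uS EM]; apply/eqP; rewrite eqn_leq {1}EM mxrank_map_mul3 /=.
have -> : N = S *m M *m invmx S by rewrite EM !mulmxA mulmxV // mul1mx mulmxK.
exact: mxrank_map_mul3.
Qed.

End MapRank.

Lemma block_mx1_pid (R : pzSemiRingType) n r :
  block_mx 1%:M 0 0 (pid_mx r) = pid_mx r.+1 :> 'M[R]_(1 + n).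
Proof.
apply/matrixP => i j; rewrite -[i]splitK -[j]splitK.
case: (split i) => i'; case: (split j) => j';
  rewrite ?block_mxEul ?block_mxEur ?block_mxEdl ?block_mxEdr !mxE //=.
all: by rewrite ?ord1.
Qed.

Lemma fixed_col_block (R : idomainType) n (G : 'M[R]_(1 + n)) (d : R) :
  d != 0 -> G *m col_mx d%:M 0 = col_mx d%:M 0 ->
  G = block_mx 1%:M (ursubmx G) 0 (drsubmx G).
Proof.
move=> d_nz; rewrite -{1}[G]submxK mul_block_col !mulmx0 !addr0 !mul_mx_scalar.
case/eq_col_mx => ul dl.
have ul1 : ulsubmx G = 1%:M.
  apply/eqP; rewrite -subr_eq0 -[_ == 0]orFb -(negbTE d_nz) -scalemx_eq0.
  by rewrite scalerBr ul scalemx1 subrr.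
have dl0 : dlsubmx G = 0.
  by apply/eqP; rewrite -[_ == 0]orFb -(negbTE d_nz) -scalemx_eq0 dl.
by rewrite -{1}[G]submxK ul1 dl0.
Qed.

Section Lift2.

Variables (R : comUnitRingType) (n : nat).

(* The matrix [p q; r s] acting on the first two coordinates. *)
Definition lift2_mx (p q r s : R) : 'M[R]_(1 + (1 + n)) :=
  block_mx p%:M (row_mx q%:M 0) (col_mx r%:M 0) (block_mx s%:M 0 0 1%:M).

Lemma lift2_mx_col p q r s a b (w : 'cV[R]_n) :
  lift2_mx p q r s *m col_mx a%:M (col_mx b%:M w)
  = col_mx (p * a + q * b)%:M (col_mx (r * a + s * b)%:M w).
Proof.
rewrite /lift2_mx mul_block_col mul_row_col mul_col_mx mul_block_col.
rewrite !(mulmx0, mul0mx, mul1mx, addr0, add0r) add_col_mx add0r.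
by rewrite -!scalar_mxM -!raddfD.
Qed.

Lemma lift2_mx_mul p q r s p' q' r' s' :
  lift2_mx p q r s *m lift2_mx p' q' r' s'
  = lift2_mx (p * p' + q * r') (p * q' + q * s') (r * p' + s * r') (r * q' + s * s').
Proof.
rewrite /lift2_mx mulmx_block.
rewrite !(mul_row_col, mul_col_mx, mul_mx_row, mul_col_row, mul_row_block, mul_block_col).
rewrite !(mulmx0, mul0mx, mul1mx, mulmx1, addr0, add0r).
by rewrite !(add_col_mx, add_row_mx, add_block_mx) !(addr0, add0r) -!scalar_mxM -!raddfD.
Qed.

Lemma lift2_mx1 : lift2_mx 1 0 0 1 = 1%:M.
Proof.
by rewrite /lift2_mx raddf0 row_mx0 col_mx0 -scalar_mx_block -scalar_mx_block.
Qed.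

Lemma lift2_mx_unit p q r s : p * s - q * r = 1 -> lift2_mx p q r s \in unitmx.
Proof.
move=> unimod; suff: lift2_mx p q r s *m lift2_mx s (- q) (- r) p = 1%:M.
  by case/mulmx1_unit.
rewrite lift2_mx_mul !mulrN [q * p]mulrC [s * r]mulrC [s * p]mulrC [r * q]mulrC.
by rewrite unimod addNr addrN addrC unimod lift2_mx1.
Qed.

End Lift2.

Arguments lift2_mx {R n}.

Section Bezout.

Variable R : idomainType.
Hypothesis bezR : bezout_domain R.

Lemma bezout_pair_reduce (a b : R) :
  exists p q r s : R, p * s - q * r = 1 /\ r * a + s * b = 0.
Proof.
have [-> | b_nz] := eqVneq b 0.
  by exists 1, 0, 0, 1; rewrite mulr0 subr0 mulr1 mul0r mul1r addr0.
have [d dP] := bezR [:: a; b].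
have mem2 (c0 c1 : R) : fg_ideal_mem [:: a; b] (c0 * a + c1 * b).
  exists (fun i : 'I_2 => [:: c0; c1]`_i).
  by rewrite !big_ord_recl big_ord0 addr0.
have [a1 Ea] : exists a1, a = a1 * d.
  by apply/dP; have := mem2 1 0; rewrite mul1r mul0r addr0.
have [b1 Eb] : exists b1, b = b1 * d.
  by apply/dP; have := mem2 0 1; rewrite mul0r mul1r add0r.
have [c Ed] : fg_ideal_mem [:: a; b] d by apply/dP; exists 1; rewrite mul1r.
move: Ed; rewrite !big_ord_recl big_ord0 addr0 /= => Ed.
have d_nz : d != 0 by apply: contraNneq b_nz => d0; rewrite Eb d0 mulr0.
exists (c ord0), (c (lift ord0 ord0)), (- b1), a1; split; last by rewrite Ea Eb; ring.
by apply: (mulIf d_nz); rewrite mul1r {2}Ed Ea Eb; ring.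
Qed.

Lemma bezout_col_reduce n (v : 'cV[R]_(1 + n)) :
  exists2 M : 'M[R]_(1 + n), M \in unitmx & exists d, M *m v = col_mx d%:M 0.
Proof.
elim: n v => [|n IHn] v.
  exists 1%:M; first exact: unitmx1.
  by exists (usubmx v 0 0); rewrite mul1mx -mx11_scalar -[LHS]vsubmxK flatmx0.
move: v; rewrite -[n.+1]/(1 + n)%N => v.
have [M uM [b Mv]] := IHn (dsubmx v).
pose a := usubmx v 0 0.
have [p [q [r [s [unimod red]]]]] := bezout_pair_reduce a b.
exists (lift2_mx p q r s *m block_mx 1%:M 0 0 M).
  by rewrite unitmx_mul lift2_mx_unit // unitmxE det_ublock det1 mul1r -unitmxE.
exists (p * a + q * b).
rewrite -mulmxA -{1}[v]vsubmxK mul_block_col !(mul1mx, mul0mx, addr0, add0r) Mv.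
by rewrite [usubmx v]mx11_scalar lift2_mx_col red raddf0 col_mx0.
Qed.

Lemma idempotent_peel n (E : 'M[R]_(1 + n)) : E *m E = E -> E != 0 ->
  exists2 E1 : 'M[R]_n, E1 *m E1 = E1 & mx_similar E (block_mx 1%:M 0 0 E1).
Proof.
move=> EE E_nz.
have [j Ej_nz] : exists j, col j E != 0.
  apply/existsP; apply: contraNT E_nz => /existsPn colE0.
  apply/eqP/matrixP => i j; move: (colE0 j) => /negPn/eqP/matrixP/(_ i 0).
  by rewrite !mxE.
set v := col j E.
have Ev : E *m v = v by rewrite /v !colE mulmxA EE.
have [M uM [d Mv]] := bezout_col_reduce v.
have d_nz : d != 0.
  by apply: contraNneq Ej_nz => d0; rewrite -/v -(mulKmx uM v) Mv d0 raddf0 col_mx0 mulmx0.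
pose G := M *m E *m invmx M.
have GG : G *m G = G by rewrite /G !mulmxA mulmxKV // -(mulmxA M) EE.
have Gd : G *m col_mx d%:M 0 = col_mx d%:M 0.
  by rewrite -Mv /G mulmxA mulmxKV // -mulmxA Ev.
have EG := fixed_col_block d_nz Gd.
move: GG; rewrite EG mulmx_block !(mulmx0, mul0mx, mul1mx, addr0, add0r).
case/eq_block_mx => _ ur_eq _ dr_idem.
exists (drsubmx G); first exact: dr_idem.
apply: (@mx_similar_trans _ _ _ G).
  apply: (intro_mx_similar (mulVmx uM)).
  by rewrite /G !mulmxA mulVmx // mul1mx mulmxKV.
rewrite {1}EG; apply: mx_similar_ublock_diag.
by apply: (addrI (ursubmx G)); rewrite addr0 ur_eq.
Qed.

Lemma idempotent_similar_pid n (E : 'M[R]_n) :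
  E *m E = E -> exists2 r, (r <= n)%N & mx_similar E (pid_mx r).
Proof.
elim: n E => [|n IHn] E EE.
  by exists 0%N; rewrite // [E]flatmx0 pid_mx_0; apply: mx_similar_refl.
have [-> | E_nz] := eqVneq E 0.
  by exists 0%N; rewrite // pid_mx_0; apply: mx_similar_refl.
move: E EE E_nz; rewrite -[n.+1]/(1 + n)%N => E EE E_nz.
have [E1 E1E1 simE] := idempotent_peel EE E_nz.
have [r le_rn simE1] := IHn E1 E1E1.
exists r.+1 => //; rewrite -block_mx1_pid.
exact: mx_similar_trans simE (mx_similar_block_diag _ simE1).
Qed.

Lemma equiv_idempotent_similar n (E F A V : 'M[R]_n) :
  E *m E = E -> F *m F = F -> A *m V = E -> V *m A = F -> mx_similar E F.
Proof.
move=> EE FF AV VA.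
have [r le_rn simE] := idempotent_similar_pid EE.
have [s le_sn simF] := idempotent_similar_pid FF.
pose rk (M : 'M[R]_n) := \rank (map_mx (@FracField.tofrac R) M).
have rkE : rk E = r by rewrite /rk (mxrank_map_similar _ simE) map_pid_mx rank_pid_mx.
have rkF : rk F = s by rewrite /rk (mxrank_map_similar _ simF) map_pid_mx rank_pid_mx.
have EAFV : E = A *m F *m V by rewrite -VA !mulmxA AV -mulmxA AV EE.
have FVEA : F = V *m E *m A by rewrite -AV !mulmxA VA -mulmxA VA FF.
have le_rs : (r <= s)%N by rewrite -rkE -rkF /rk {1}EAFV mxrank_map_mul3.
have le_sr : (s <= r)%N by rewrite -rkE -rkF /rk {1}FVEA mxrank_map_mul3.
have r_eq_s : r = s by apply/eqP; rewrite eqn_leq le_rs.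
by rewrite r_eq_s in simE; apply: mx_similar_trans simE (mx_similar_sym simF).
Qed.

Lemma group_inverses_similar n (P Q X Y A V : 'M[R]_n) :
  is_group_inverse P X -> is_group_inverse Q Y ->
  A *m V = P *m X -> V *m A = Q *m Y -> V *m (P *m X) = V -> Y *m V = V *m X ->
  mx_similar X Y.
Proof.
move=> [PX XPX PXP] [QY YQY QYQ] AV VA VE YV.
have idPX : P *m X *m (P *m X) = P *m X by rewrite mulmxA PXP.
have idQY : Q *m Y *m (Q *m Y) = Q *m Y by rewrite mulmxA QYQ.
have [S [uS ES]] := equiv_idempotent_similar idPX idQY AV VA.
have SE : S *m (P *m X) = Q *m Y *m S by rewrite ES !mulmxA mulmxV // mul1mx.
have EX : P *m X *m X = X by rewrite PX XPX.
have YF : Y *m (Q *m Y) = Y by rewrite mulmxA YQY.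
pose T := V + S *m (1%:M - P *m X).
have TT' : T *m (A *m (Q *m Y) + invmx S *m (1%:M - Q *m Y)) = 1%:M :=
  idempotent_conjugator_rinv idQY AV VA VE (mulmxV uS) (mulVmx uS) SE.
have TX : T *m X = Y *m T := idempotent_conjugator_intertwine idPX SE EX YF (esym YV).
have [uT _] := mulmx1_unit TT'.
by exists T; split=> //; rewrite -mulmxA -TX mulKmx.
Qed.

End Bezout.

Theorem theorem3p1 (R : idomainType) (n : nat) (A B C : 'M[R]_n) :
  bezout_domain R ->
  A *m B *m A = A *m C *m A ->
  group_invertible (A *m B) -> group_invertible (C *m A) ->
  forall X Y : 'M[R]_n,
    is_group_inverse (A *m B) X -> is_group_inverse (C *m A) Y ->
    mx_similar X Y.
Proof.
move=> bezR ABA_ACA _ _ X Y gX gY.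
have [PX XPX _] := gX.
have XE : X = A *m B *m (X *m X) by rewrite mulmxA PX XPX.
have PA : A *m B *m A = A *m (C *m A) by rewrite ABA_ACA mulmxA.
have XA : X *m A = A *m Y := group_inverse_intertwine gX gY PA.
have QZ : C *m A *m (C *m A *m B) = C *m A *m B *m (A *m B).
  by rewrite !mulmxA -(mulmxA C A C) -(mulmxA C (A *m C) A) -ABA_ACA !mulmxA.
have := group_inverse_intertwine gY gX QZ; rewrite !mulmxA => YZ.
apply: (group_inverses_similar bezR gX gY (A := A) (V := C *m X)).
- by rewrite {1 2}XE !mulmxA -ABA_ACA.
- by rewrite -mulmxA XA mulmxA.
- by rewrite -mulmxA (mulmxA X) XPX.
- by rewrite {1 2}XE !mulmxA YZ.
Qed.
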